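(* Assume $\varphi'(t) > 0$ for all $t \in [-1,1]$ and that the graph defined by the weights $w_{ij} \geq 0$ is connected. Let $X \in \mathcal{M}$ be a critical point of $f$ at which the Riemannian Hessian is negative semidefinite. If there exists a nonzero $v \in \mathbb{R}^d$ with $X^\top v \geq 0$ entrywise (i.e., $x_1,\dots,x_n$ lie in a common closed hemisphere), then $X$ is a global maximum of $f$ (equivalently $x_1 = \cdots = x_n$). Such a vector $v$ exists whenever $\mathrm{rank}(X) < d$.
   Context: $d\geq 2$, $\mathcal{M} = (\mathbb{S}^{d-1})^n$ is the set of $X \in \mathbb{R}^{d\times n}$ with unit-norm columns $x_1,\dots,x_n$, a Riemannian submanifold of $\mathbb{R}^{d\times n}$ with the Frobenius metric. $\varphi:[-1,1]\to\mathbb{R}$ is twice continuously differentiable, $W$ is symmetric with $w_{ij}\ge0$, the graph has edge $\{i,j\}$ iff $w_{ij}>0$, and $f(X) = \frac12\sum_{i,j} w_{ij}\varphi(x_i^\top x_j)$. Gradient and Hessian are Riemannian. *)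

From HB Require Import structures.
From mathcomp Require Import all_boot all_order all_algebra.
From mathcomp Require Import all_classical all_reals all_analysis.
Set Implicit Arguments. Unset Strict Implicit. Unset Printing Implicit Defensive.
Import Order.TTheory GRing.Theory Num.Theory.
Import numFieldNormedType.Exports.
Local Open Scope ring_scope.

Section Defs.
Variables (R : realType) (d n : nat).

Definition frob (A B : 'M[R]_(d, n)) : R :=
  \sum_(k < d) \sum_(i < n) A k i * B k i.

Definition on_manifold (X : 'M[R]_(d, n)) : Prop :=
  forall i : 'I_n, \sum_(k < d) X k i ^+ 2 = 1.

Definition tangent (X U : 'M[R]_(d, n)) : Prop :=
  forall i : 'I_n, \sum_(k < d) X k i * U k i = 0.

Definition obj (W : 'M[R]_n) (phi : R -> R) (X : 'M[R]_(d, n)) : R :=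
  2^-1 * \sum_(i < n) \sum_(j < n) W i j * phi (\sum_(k < d) X k i * X k j).

Definition egrad (F : 'M[R]_(d, n) -> R) (X : 'M[R]_(d, n)) : 'M[R]_(d, n) :=
  \matrix_(k, i) derive1 (fun t : R => F (X + t *: delta_mx k i)) 0.

Definition proj (X G : 'M[R]_(d, n)) : 'M[R]_(d, n) :=
  \matrix_(k, i) (G k i - (\sum_(l < d) X l i * G l i) * X k i).

Definition rgrad (F : 'M[R]_(d, n) -> R) (X : 'M[R]_(d, n)) : 'M[R]_(d, n) :=
  proj X (egrad F X).

Definition ehess (F : 'M[R]_(d, n) -> R) (X U : 'M[R]_(d, n)) : 'M[R]_(d, n) :=
  \matrix_(k, i) derive1 (fun t : R => egrad F (X + t *: U) k i) 0.

Definition rhess (F : 'M[R]_(d, n) -> R) (X U : 'M[R]_(d, n)) : 'M[R]_(d, n) :=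
  proj X (ehess F X U)
  - \matrix_(k, i) ((\sum_(l < d) X l i * egrad F X l i) * U k i).

End Defs.

Definition graph_connected (R : realType) (n : nat) (W : 'M[R]_n) : Prop :=
  forall i j : 'I_n, connect [rel a b | 0 < W a b] i j.

From HB Require Import structures.
From mathcomp Require Import all_boot all_order all_algebra.
From mathcomp Require Import all_classical all_reals all_analysis.
From mathcomp Require Import ring lra.
Import Order.TTheory GRing.Theory Num.Theory.
Import numFieldNormedType.Exports.
Local Open Scope ring_scope.

(* With a_ij := w_ij phi'(x_i^T x_j) >= 0, criticality reads
   sum_j a_ij x_j = mu_i x_i. Pairing with v and writing c_i := x_i^T v >= 0
   gives sum_ij a_ij c_i (1 - x_i^T x_j) = 0, so on every edge either the two
   columns coincide or c_i = c_j = 0. These slackness relations make the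
   Hessian quadratic form in the direction u_i := v - c_i x_i (the projection
   of the constant field v onto the tangent spaces) equal to
   |v|^2 sum_ij a_ij (1 - x_i^T x_j) >= 0. Negative semidefiniteness forces
   x_i = x_j along every edge, hence everywhere by connectedness; and then
   f(X) = phi(1) sum w_ij / 2 is maximal because phi is increasing on [-1, 1]. *)

Set Implicit Arguments. Unset Strict Implicit.

Section Calculus.
Variable R : realType.

Lemma is_derive_sumf n (h : 'I_n -> R -> R) (x : R) (dh : 'I_n -> R) :
  (forall i, is_derive x 1 (h i) (dh i)) ->
  is_derive x 1 (fun t => \sum_(i < n) h i t) (\sum_(i < n) dh i).
Proof.
move=> hd; have := is_derive_sum hd.
suff -> : \sum_(i < n) h i = (fun t => \sum_(i < n) h i t) by [].
by apply/funext => t; rewrite fct_sumE.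
Qed.

Lemma is_deriveMf (f g : R -> R) (x df dg : R) :
  is_derive x 1 f df -> is_derive x 1 g dg ->
  is_derive x 1 (fun t => f t * g t) (f x * dg + g x * df).
Proof. by move=> fd gd; exact: (is_deriveM fd gd). Qed.

Lemma is_derive_compf (f g : R -> R) (x df : R) :
  is_derive x 1 f df -> derivable g (f x) 1 ->
  is_derive x 1 (fun t => g (f t)) (derive1 g (f x) * df).
Proof.
move=> fd gd; have fdx : derivable f x 1 by case: fd.
apply: DeriveDef.
  apply/derivable1_diffP; apply: (@differentiable_comp _ _ _ _ f g).
    exact/derivable1_diffP.
  exact/derivable1_diffP.
rewrite -derive1E -[fun t => _]/(g \o f) derive1_comp // [X in _ * X]derive1E.
by rewrite (derive_val (f := f)).
Qed.

Lemma derive1_ge0_le (f : R -> R) (a b t : R) :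
  (forall x, derivable f x 1) -> (forall x, a < x < b -> 0 <= derive1 f x) ->
  a <= t <= b -> f t <= f b.
Proof.
move=> fd f'_ge0 /andP[a_le_t t_le_b].
have f'_itv_ge0 x : x \in `]a, b[ -> 0 <= derive1 f x.
  by rewrite in_itv /=; exact: f'_ge0.
have f_cont : {within `[a, b], continuous f}%classic.
  by apply: derivable_within_continuous => x _; exact: fd.
exact: (ger0_derive1_ndecr (fun x _ => fd x) f'_itv_ge0 f_cont a_le_t t_le_b (lexx b)).
Qed.

End Calculus.

Lemma sum_delta (R : nzRingType) m (F : 'I_m -> R) k :
  \sum_(l < m) (l == k)%:R * F l = F k.
Proof.
rewrite (bigD1 k) //= eqxx mul1r big1 ?addr0 // => l /negbTE ->.
by rewrite mul0r.
Qed.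

Lemma psumr2_eq0 (R : numDomainType) m (F : 'I_m -> 'I_m -> R) :
  (forall i j, 0 <= F i j) -> \sum_(i < m) \sum_(j < m) F i j = 0 ->
  forall i j, F i j = 0.
Proof.
move=> F_ge0 F0 i j.
have /(_ i isT) Fi0 := psumr_eq0P (fun i _ => sumr_ge0 _ (fun j _ => F_ge0 i j)) F0.
exact: (psumr_eq0P (fun j _ => F_ge0 i j) Fi0).
Qed.

Lemma connect_eq_fun (T : finType) (U : Type) (e : rel T) (f : T -> U) :
  (forall x y, e x y -> f x = f y) -> forall x y, connect e x y -> f x = f y.
Proof.
move=> fe x y /connectP[p]; elim: p x => [|z p IH] x /=; first by move=> _ ->.
by case/andP=> /fe -> zp yl; exact: IH zp yl.
Qed.

Lemma exists_trmx_mul_eq0 (F : fieldType) m p (X : 'M[F]_(m, p)) :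
  (\rank X < m)%N -> exists v : 'cV[F]_m, v != 0 /\ X^T *m v = 0.
Proof.
move=> rkX; have : kermx X != 0 by rewrite kermx_eq0 /row_free ltn_eqF.
case/rowV0Pn => u /sub_kermxP uX u_ne0; exists u^T.
by rewrite trmx_eq0 -trmx_mul uX trmx0.
Qed.

Section Gram.
Variables (R : realType) (d n : nat).
Implicit Types (X Y U : 'M[R]_(d, n)) (v : 'cV[R]_d).

Definition gram Y i j := \sum_(l < d) Y l i * Y l j.

Definition dgram Y U i j := \sum_(l < d) (U l i * Y l j + Y l i * U l j).

Lemma gramC Y i j : gram Y i j = gram Y j i.
Proof. by apply: eq_bigr => l _; rewrite mulrC. Qed.

Lemma is_derive_entry Y U l i :
  is_derive (0 : R) 1 (fun t : R => (Y + t *: U) l i) (U l i).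
Proof.
have -> : (fun t : R => (Y + t *: U) l i) = (fun t => Y l i + t * U l i).
  by apply/funext => t; rewrite !mxE.
have := is_deriveD (is_derive_cst (Y l i) (0 : R) (1 : R))
  (is_deriveMf (is_derive_id (0 : R) 1) (is_derive_cst (U l i) (0 : R) 1)).
by rewrite mulr0 mulr1 !add0r.
Qed.

Lemma is_derive_gram Y U i j :
  is_derive (0 : R) 1 (fun t : R => gram (Y + t *: U) i j) (dgram Y U i j).
Proof.
apply: is_derive_sumf => l.
apply: is_derive_eq (is_deriveMf (is_derive_entry Y U l i) (is_derive_entry Y U l j)) _.
by rewrite scale0r addr0 addrC; congr (_ + _); rewrite mulrC.
Qed.

Lemma is_derive_obj (W : 'M[R]_n) (phi : R -> R) Y U :
  (forall x, derivable phi x 1) ->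
  is_derive (0 : R) 1 (fun t : R => obj W phi (Y + t *: U))
    (2^-1 * \sum_(i < n) \sum_(j < n)
       W i j * (derive1 phi (gram Y i j) * dgram Y U i j)).
Proof.
move=> phi_der; apply: is_derive_eq.
  apply: (is_deriveMf (is_derive_cst _ _ _)).
  apply: is_derive_sumf => i; apply: is_derive_sumf => j.
  apply: (is_deriveMf (is_derive_cst _ _ _)).
  exact: (is_derive_compf (is_derive_gram Y U i j)).
rewrite /= mulr0 addr0; congr (_ * _).
by apply: eq_bigr => i _; apply: eq_bigr => j _; rewrite mulr0 addr0 scale0r addr0.
Qed.

Lemma dgram_delta Y k i a b :
  dgram Y (delta_mx k i) a b = (a == i)%:R * Y k b + (b == i)%:R * Y k a.
Proof.
rewrite /dgram big_split /=; congr (_ + _).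
  rewrite -(sum_delta (fun l => (a == i)%:R * Y l b) k); apply: eq_bigr => l _.
  by rewrite mxE -mulnb natrM mulrA.
rewrite -(sum_delta (fun l => (b == i)%:R * Y l a) k); apply: eq_bigr => l _.
by rewrite mxE -mulnb natrM mulrC mulrA.
Qed.

Lemma egradE (W : 'M[R]_n) (phi : R -> R) Y k i :
  W^T = W -> (forall x, derivable phi x 1) ->
  egrad (obj W phi) Y k i = \sum_(j < n) W i j * derive1 phi (gram Y i j) * Y k j.
Proof.
move=> WT phi_der.
have := is_derive_obj W Y (delta_mx k i) phi_der.
rewrite /egrad mxE derive1E => obj_der; rewrite derive_val.
under eq_bigr => a _ do under eq_bigr => b _ do rewrite dgram_delta mulrDr mulrDr.
under eq_bigr => a _ do rewrite big_split /=.
rewrite big_split /=.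
have -> : \sum_(a < n) \sum_(b < n)
    W a b * (derive1 phi (gram Y a b) * ((a == i)%:R * Y k b))
  = \sum_(j < n) W i j * derive1 phi (gram Y i j) * Y k j.
  rewrite -(sum_delta (fun a => \sum_(b < n) W a b * derive1 phi (gram Y a b) * Y k b)).
  by apply: eq_bigr => a _; rewrite mulr_sumr; apply: eq_bigr => b _; ring.
have -> : \sum_(a < n) \sum_(b < n)
    W a b * (derive1 phi (gram Y a b) * ((b == i)%:R * Y k a))
  = \sum_(j < n) W i j * derive1 phi (gram Y i j) * Y k j.
  apply: eq_bigr => a _.
  rewrite (bigD1 i) //= eqxx mul1r big1 ?addr0; last first.
    by move=> b /negbTE ->; rewrite mul0r !mulr0.
  have -> : W a i = W i a by rewrite -[in LHS]WT mxE.
  by rewrite gramC; ring.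
by field.
Qed.

Lemma ehessE (W : 'M[R]_n) (phi : R -> R) Y U k i :
  W^T = W -> (forall x, derivable phi x 1) ->
  (forall x, derivable (derive1 phi) x 1) ->
  ehess (obj W phi) Y U k i = \sum_(j < n) W i j *
    (derive1 (derive1 phi) (gram Y i j) * dgram Y U i j * Y k j
     + derive1 phi (gram Y i j) * U k j).
Proof.
move=> WT phi_der phi'_der; rewrite /ehess mxE derive1E.
under [fun t => _]funext => t do rewrite egradE //.
apply: derive_val; apply: is_derive_sumf => j.
apply: is_derive_eq.
  apply: is_deriveMf; last exact: is_derive_entry.
  apply: (is_deriveMf (is_derive_cst _ _ _)).
  exact: (is_derive_compf (is_derive_gram Y U i j)).
rewrite /=; change (mx_val W (i, j)) with (W i j).
by rewrite !scale0r !addr0 mulr0 addr0; ring.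
Qed.

Lemma rhessE (F : 'M[R]_(d, n) -> R) Y U k i :
  rhess F Y U k i = ehess F Y U k i
    - (\sum_(l < d) Y l i * ehess F Y U l i) * Y k i
    - (\sum_(l < d) Y l i * egrad F Y l i) * U k i.
Proof. by rewrite /rhess /proj !mxE. Qed.

Lemma gram_sqr_expand Y i j (s : R) :
  \sum_(l < d) (Y l i + s * Y l j) ^+ 2 =
  \sum_(l < d) Y l i ^+ 2 + s ^+ 2 * \sum_(l < d) Y l j ^+ 2 + 2 * s * gram Y i j.
Proof. by rewrite /gram !mulr_sumr -!big_split /=; apply: eq_bigr => l _; ring. Qed.

Lemma gram_bound Y : on_manifold Y -> forall i j, -1 <= gram Y i j <= 1.
Proof.
move=> Y_sphere i j.
have := gram_sqr_expand Y i j 1; have := gram_sqr_expand Y i j (-1).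
rewrite !Y_sphere => e_minus e_plus.
have s_ge0 s : 0 <= \sum_(l < d) (Y l i + s * Y l j) ^+ 2.
  by apply: sumr_ge0 => l _; exact: sqr_ge0.
have := s_ge0 1; have := s_ge0 (-1); rewrite e_minus e_plus.
by move=> *; apply/andP; split; nra.
Qed.

Lemma gram_diag Y : on_manifold Y -> forall i, gram Y i i = 1.
Proof.
by move=> Y_sphere i; rewrite -(Y_sphere i); apply: eq_bigr => l _; rewrite expr2.
Qed.

Lemma gram_eq1_col Y : on_manifold Y -> forall i j, gram Y i j = 1 ->
  forall l, Y l i = Y l j.
Proof.
move=> Y_sphere i j Yij1 l.
have := gram_sqr_expand Y i j (-1); rewrite !Y_sphere Yij1 => e.
have e0 : \sum_(l < d) (Y l i + -1 * Y l j) ^+ 2 = 0 by rewrite e; ring.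
have := psumr_eq0P (fun l _ => sqr_ge0 (Y l i + -1 * Y l j)) e0.
by move=> /(_ l isT) /eqP; rewrite sqrf_eq0 mulN1r subr_eq0 => /eqP.
Qed.

Lemma trmx_mulmxE X v i : (X^T *m v) i 0 = \sum_(l < d) X l i * v l 0.
Proof. by rewrite mxE; apply: eq_bigr => l _; rewrite mxE. Qed.

Definition tproj X v : 'M[R]_(d, n) :=
  \matrix_(k, i) (v k 0 - (X^T *m v) i 0 * X k i).

Lemma tprojE X v k i : tproj X v k i = v k 0 - (X^T *m v) i 0 * X k i.
Proof. by rewrite mxE. Qed.

Lemma tangent_tproj X v : on_manifold X -> tangent X (tproj X v).
Proof.
move=> X_sphere i; under eq_bigr => l _ do rewrite tprojE.
have -> : \sum_(l < d) X l i * (v l 0 - (X^T *m v) i 0 * X l i) =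
    \sum_(l < d) X l i * v l 0 - (X^T *m v) i 0 * \sum_(l < d) X l i ^+ 2.
  by rewrite mulr_sumr -sumrB; apply: eq_bigr => l _; ring.
by rewrite -trmx_mulmxE X_sphere; ring.
Qed.

Lemma dgram_tproj X v i j :
  dgram X (tproj X v) i j =
  (X^T *m v) j 0 + (X^T *m v) i 0 - ((X^T *m v) i 0 + (X^T *m v) j 0) * gram X i j.
Proof.
rewrite /dgram; under eq_bigr => l _ do rewrite !tprojE.
have -> : \sum_(l < d) ((v l 0 - (X^T *m v) i 0 * X l i) * X l j
                         + X l i * (v l 0 - (X^T *m v) j 0 * X l j)) =
    \sum_(l < d) (X l j * v l 0 + X l i * v l 0)
    - ((X^T *m v) i 0 + (X^T *m v) j 0) * gram X i j.
  by rewrite /gram mulr_sumr -sumrB; apply: eq_bigr => l _; ring.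
by rewrite big_split -!trmx_mulmxE.
Qed.

Lemma gram_tproj X v : on_manifold X -> forall i j,
  gram (tproj X v) i j = \sum_(k < d) v k 0 ^+ 2
    - (X^T *m v) i 0 ^+ 2 - (X^T *m v) j 0 ^+ 2
    + (X^T *m v) i 0 * (X^T *m v) j 0 * gram X i j.
Proof.
move=> X_sphere i j; rewrite /gram; under eq_bigr => l _ do rewrite !tprojE.
set ci := (X^T *m v) i 0; set cj := (X^T *m v) j 0.
have -> : \sum_(l < d) (v l 0 - ci * X l i) * (v l 0 - cj * X l j) =
    \sum_(l < d) v l 0 ^+ 2 - ci * \sum_(l < d) X l i * v l 0
    - cj * \sum_(l < d) X l j * v l 0 + ci * cj * \sum_(l < d) X l i * X l j.
  by rewrite !mulr_sumr -!sumrB -big_split /=; apply: eq_bigr => l _; ring.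
by rewrite -!trmx_mulmxE -/ci -/cj; ring.
Qed.

Lemma obj_le_cols_eq (W : 'M[R]_n) (phi : R -> R) X Y :
  (forall i j, 0 <= W i j) -> (forall t, -1 <= t <= 1 -> phi t <= phi 1) ->
  on_manifold X -> (forall i j, col i X = col j X) -> on_manifold Y ->
  obj W phi Y <= obj W phi X.
Proof.
move=> W_ge0 phi_le X_sphere cols Y_sphere; rewrite /obj ler_wpM2l ?invr_ge0 //.
apply: ler_sum => i _; apply: ler_sum => j _; apply: ler_wpM2l => //.
have -> : \sum_(k < d) X k i * X k j = 1.
  rewrite -(X_sphere i); apply: eq_bigr => k _.
  by have := congr1 (fun M : 'cV[R]_d => M k 0) (cols j i); rewrite !mxE expr2 => ->.
exact: phi_le (gram_bound Y_sphere i j).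
Qed.

Section CriticalPoint.
Variables (W : 'M[R]_n) (phi : R -> R) (X : 'M[R]_(d, n)).
Hypotheses (WT : W^T = W) (W_ge0 : forall i j, 0 <= W i j).
Hypotheses (phi_der : forall x, derivable phi x 1)
  (phi'_der : forall x, derivable (derive1 phi) x 1)
  (phi'_gt0 : forall t, -1 <= t <= 1 -> 0 < derive1 phi t).
Hypotheses (X_sphere : on_manifold X) (X_crit : rgrad (obj W phi) X = 0)
  (X_nsd : forall U, tangent X U -> frob U (rhess (obj W phi) X U) <= 0).

Let a i j := W i j * derive1 phi (gram X i j).

Lemma weight_ge0 i j : 0 <= a i j.
Proof. by rewrite mulr_ge0 // ltW // phi'_gt0 // gram_bound. Qed.

Lemma weight_gt0 i j : 0 < W i j -> 0 < a i j.
Proof. by move=> W_gt0; rewrite mulr_gt0 // phi'_gt0 // gram_bound. Qed.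

Lemma weightC i j : a i j = a j i.
Proof. by rewrite /a gramC -[in LHS]WT mxE. Qed.

Lemma egrad_weight k i : egrad (obj W phi) X k i = \sum_(j < n) a i j * X k j.
Proof. exact: egradE. Qed.

Lemma egrad_radial i :
  \sum_(l < d) X l i * egrad (obj W phi) X l i = \sum_(j < n) a i j * gram X i j.
Proof.
under eq_bigr => l _ do rewrite egrad_weight mulr_sumr.
rewrite exchange_big /=; apply: eq_bigr => j _; rewrite /gram mulr_sumr.
by apply: eq_bigr => l _; ring.
Qed.

Lemma egrad_normal k i :
  egrad (obj W phi) X k i = (\sum_(j < n) a i j * gram X i j) * X k i.
Proof.
have := congr1 (fun M : 'M[R]_(d, n) => M k i) X_crit.
rewrite /rgrad /proj !mxE => /eqP; rewrite subr_eq0 => /eqP ->.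
by rewrite egrad_radial.
Qed.

Section Hemisphere.
Variable v : 'cV[R]_d.
Hypotheses (v_ne0 : v != 0) (v_hemi : forall i, 0 <= (X^T *m v) i 0).

Let c i : R := (X^T *m v) i 0.
Let U := tproj X v.

Lemma weight_balance i :
  \sum_(j < n) a i j * c j = (\sum_(j < n) a i j * gram X i j) * c i.
Proof.
transitivity (\sum_(k < d) egrad (obj W phi) X k i * v k 0).
  under eq_bigr => j _ do rewrite /c trmx_mulmxE mulr_sumr.
  rewrite exchange_big /=; apply: eq_bigr => k _; rewrite egrad_weight mulr_suml.
  by apply: eq_bigr => j _; ring.
under eq_bigr => k _ do rewrite egrad_normal.
by rewrite /c trmx_mulmxE mulr_sumr; apply: eq_bigr => k _; ring.
Qed.

Lemma weight_slack i j : a i j != 0 ->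
  c i * (1 - gram X i j) = 0 /\ c j * (1 - gram X i j) = 0.
Proof.
have slack_ge0 i' j' : 0 <= a i' j' * c i' * (1 - gram X i' j').
  apply: mulr_ge0; first exact: mulr_ge0 (weight_ge0 i' j') (v_hemi i').
  by rewrite subr_ge0; case/andP: (gram_bound X_sphere i' j').
have swap : \sum_(i < n) \sum_(j < n) a i j * c j =
            \sum_(i < n) \sum_(j < n) a i j * c i.
  rewrite exchange_big; apply: eq_bigr => i' _.
  by apply: eq_bigr => j' _; rewrite weightC.
have slack_sum : \sum_(i < n) \sum_(j < n) a i j * c i * (1 - gram X i j) = 0.
  rewrite -[RHS](subrr (\sum_(i < n) \sum_(j < n) a i j * c i)) -[X in _ - X]swap.
  rewrite -sumrB; apply: eq_bigr => i' _.
  by rewrite weight_balance mulr_suml -sumrB; apply: eq_bigr => j' _; ring.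
have slack0 := psumr2_eq0 slack_ge0 slack_sum.
move=> a_ne0; split.
  by move/eqP: (slack0 i j); rewrite -mulrA mulf_eq0 (negbTE a_ne0) => /eqP.
move/eqP: (slack0 j i); rewrite -weightC gramC -mulrA mulf_eq0 (negbTE a_ne0).
by move/eqP.
Qed.

Lemma edge_dgram_tproj i j : W i j * dgram X U i j = 0.
Proof.
have [-> | W_ne0] := eqVneq (W i j) 0; first by rewrite mul0r.
have a_gt0 : 0 < a i j by rewrite weight_gt0 // lt_def W_ne0 W_ge0.
have [ci0 cj0] := weight_slack (lt0r_neq0 a_gt0).
rewrite dgram_tproj -/(c i) -/(c j).
have -> : c j + c i - (c i + c j) * gram X i j =
          c i * (1 - gram X i j) + c j * (1 - gram X i j) by ring.
by rewrite ci0 cj0 addr0 mulr0.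
Qed.

Lemma ehess_tproj k i :
  ehess (obj W phi) X U k i = \sum_(j < n) a i j * U k j.
Proof.
rewrite ehessE //; apply: eq_bigr => j _; rewrite mulrDr.
have -> : W i j * (derive1 (derive1 phi) (gram X i j) * dgram X U i j * X k j) =
    W i j * dgram X U i j * (derive1 (derive1 phi) (gram X i j) * X k j) by ring.
by rewrite edge_dgram_tproj mul0r add0r /a mulrA.
Qed.

Lemma rhess_tproj_col i :
  \sum_(k < d) U k i * rhess (obj W phi) X U k i =
  \sum_(j < n) a i j * (gram U i j - gram X i j * gram U i i).
Proof.
set s := \sum_(l < d) X l i * ehess (obj W phi) X U l i.
transitivity (\sum_(k < d) U k i * (\sum_(j < n) a i j * U k j)
    - s * \sum_(k < d) X k i * U k i
    - (\sum_(j < n) a i j * gram X i j) * \sum_(k < d) U k i * U k i).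
  rewrite !mulr_sumr -!sumrB; apply: eq_bigr => k _.
  by rewrite rhessE -/s ehess_tproj egrad_radial; ring.
rewrite (tangent_tproj v X_sphere i) mulr0 subr0 mulr_suml.
under eq_bigr => k _ do rewrite mulr_sumr.
rewrite exchange_big /= -sumrB; apply: eq_bigr => j _.
rewrite mulrBr mulrA [gram U i i]/gram; congr (_ - _).
by rewrite /gram mulr_sumr; apply: eq_bigr => k _; ring.
Qed.

Lemma weight_gram_tproj i j :
  a i j * (gram U i j - gram X i j * gram U i i) =
  a i j * ((\sum_(k < d) v k 0 ^+ 2) * (1 - gram X i j)).
Proof.
have [-> | a_ne0] := eqVneq (a i j) 0; first by rewrite !mul0r.
have [ci0 cj0] := weight_slack a_ne0.
congr (_ * _); rewrite !gram_tproj // gram_diag // -/(c i) -/(c j).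
have [Xij1 | Xij_ne1] := eqVneq (gram X i j) 1.
  have -> : c i = c j.
    rewrite /c !trmx_mulmxE; apply: eq_bigr => l _.
    by rewrite (gram_eq1_col X_sphere Xij1).
  by rewrite Xij1; ring.
have slack_ne0 : 1 - gram X i j != 0 by rewrite subr_eq0 eq_sym.
move/eqP: ci0; rewrite mulf_eq0 (negbTE slack_ne0) orbF => /eqP ->.
move/eqP: cj0; rewrite mulf_eq0 (negbTE slack_ne0) orbF => /eqP ->.
ring.
Qed.

Lemma hessian_tproj : frob U (rhess (obj W phi) X U) =
  \sum_(i < n) \sum_(j < n) a i j * ((\sum_(k < d) v k 0 ^+ 2) * (1 - gram X i j)).
Proof.
rewrite /frob exchange_big /=; apply: eq_bigr => i _.
by rewrite rhess_tproj_col; apply: eq_bigr => j _; rewrite weight_gram_tproj.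
Qed.

Lemma critical_edge_gram1 i j : 0 < W i j -> gram X i j = 1.
Proof.
move=> W_gt0; set V := \sum_(k < d) v k 0 ^+ 2.
have V_gt0 : 0 < V.
  rewrite lt_def sumr_ge0 ?andbT => [|k _]; last exact: sqr_ge0.
  apply: contra v_ne0 => /eqP V0; apply/eqP/matrixP => k z; rewrite (ord1 z) mxE.
  have := psumr_eq0P (fun k _ => sqr_ge0 (v k 0)) V0.
  by move=> /(_ k isT) /eqP; rewrite sqrf_eq0 => /eqP.
have term_ge0 i' j' : 0 <= a i' j' * (V * (1 - gram X i' j')).
  apply: mulr_ge0 (weight_ge0 i' j') (mulr_ge0 (ltW V_gt0) _).
  by rewrite subr_ge0; case/andP: (gram_bound X_sphere i' j').
have hess0 : \sum_(i < n) \sum_(j < n) a i j * (V * (1 - gram X i j)) = 0.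
  apply/eqP; rewrite eq_le -hessian_tproj (X_nsd (tangent_tproj v X_sphere)) /=.
  by rewrite hessian_tproj; apply: sumr_ge0 => i' _; apply: sumr_ge0 => j' _.
move/eqP: (psumr2_eq0 term_ge0 hess0 i j).
rewrite mulf_eq0 (gt_eqF (weight_gt0 W_gt0)) mulf_eq0 (gt_eqF V_gt0) /=.
by rewrite subr_eq0 => /eqP.
Qed.

Lemma critical_hemisphere_cols_eq :
  graph_connected W -> forall i j, col i X = col j X.
Proof.
move=> W_conn i j; apply: (connect_eq_fun (f := fun k => col k X) _ (W_conn i j)).
move=> {}i {}j /= W_gt0.
apply/matrixP => l z; rewrite !mxE.
exact: (gram_eq1_col X_sphere (critical_edge_gram1 W_gt0) l).
Qed.

End Hemisphere.
End CriticalPoint.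
End Gram.

Unset Implicit Arguments.

Theorem mainTheorem11 (R : realType) (d n : nat) (phi : R -> R)
    (W : 'M[R]_n) (X : 'M[R]_(d, n)) :
  (2 <= d)%N ->
  (* phi is C^2 *)
  (forall x : R, derivable phi x 1) ->
  (forall x : R, derivable (derive1 phi) x 1) ->
  continuous (derive1 (derive1 phi)) ->
  (* W symmetric, nonnegative, connected graph *)
  W^T = W -> (forall i j, 0 <= W i j) -> graph_connected W ->
  (* phi' > 0 on [-1,1] *)
  (forall t : R, -1 <= t <= 1 -> 0 < derive1 phi t) ->
  (* X is a critical point with negative semidefinite Riemannian Hessian *)
  on_manifold X ->
  rgrad (@obj R d n W phi) X = 0 ->
  (forall U, tangent X U -> frob U (rhess (@obj R d n W phi) X U) <= 0) ->
  ((exists v : 'cV[R]_d, v != 0 /\ forall i, 0 <= (X^T *m v) i 0) ->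
     (forall Y, on_manifold Y -> @obj R d n W phi Y <= @obj R d n W phi X) /\
     (forall i j : 'I_n, col i X = col j X))
  /\
  ((\rank X < d)%N -> exists v : 'cV[R]_d, v != 0 /\ forall i, 0 <= (X^T *m v) i 0).
Proof.
move=> _ phi_der phi'_der _ WT W_ge0 W_conn phi'_gt0 X_sphere X_crit X_nsd.
split=> [[v [v_ne0 v_hemi]] | rkX].
  have cols := critical_hemisphere_cols_eq WT W_ge0 phi_der phi'_der phi'_gt0
    X_sphere X_crit X_nsd v_ne0 v_hemi W_conn.
  split=> // Y Y_sphere; apply: obj_le_cols_eq => // t.
  apply: derive1_ge0_le => // x /andP[x_gt x_lt].
  by apply/ltW/phi'_gt0; rewrite (ltW x_gt) (ltW x_lt).
have [v [v_ne0 Xv0]] := exists_trmx_mul_eq0 rkX.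
by exists v; split=> // i; rewrite Xv0 mxE.
Qed.
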